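(* In $TTR$: (1) If $A$ is a without-arrow type of kind 1 and $A\subseteq B$, then $B$ is a without-arrow type of kind 1 and $At(A)=At(B)$. (2) If $A$ is a without-arrow type of kind 2, then $A\subseteq B$ for every type $B$.
   Context: $TTR$ types: over a second-order language with first-order variables, function symbols, $n$-ary predicate variables and symbols, and a fixed system $\mathbf E$ of equations; atomic $\perp$ and $X(t_1,\dots,t_n)$; constructors $\to$, $\forall x$, $\forall X$, and $\mu Cx_1\dots x_nA\langle t_1,\dots,t_n\rangle$ for $C$ an $n$-ary predicate symbol occurring and positive in $A$ (bound in it). Subtyping $\subseteq$ is the least relation closed under: $A\subseteq A$; from $A\subseteq A'$, $B\subseteq B'$ infer $A'\to B\subseteq A\to B'$; from $A[G/v]\subseteq B$ infer $\forall vA\subseteq B$ ($G$ a term if $v$ first-order, a formula if $v$ a predicate variable); from $A\subseteq B$ infer $A\subseteq\forall vB$ if $v$ not free in $A$; from $A\subseteq B[v/y]$ infer $A\subseteq B[w/y]$ if $v=w$ is an instance of an equation of $\mathbf E$; transitivity; $D[\mu C\bar xD\langle\bar z\rangle/C(\bar z)][\bar t/\bar x]\subseteq\mu C\bar xD\langle\bar t\rangle$ and its converse; from $D[E/C(\bar x)]\subseteq E$ infer $\mu C\bar xD\langle\bar t\rangle\subseteq E[\bar t/\bar x]$. A without-arrow type is a type containing no arrow $\to$. Each without-arrow type $A$ contains a unique atomic formula $X(t_1,\dots,t_n)$, and $At(A)$ denotes this $X$. $A$ is of kind 1 if $At(A)$ is free in $A$, and of kind 2 if $At(A)$ is bound in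 $A$. *)

(* Syntax and subtyping of the system TTR, with de Bruijn
   indices (two independent index spaces: first-order variables and
   predicate variables/symbols). *)
From Stdlib Require Import List Arith.
Import ListNotations.

Inductive term : Type :=
| TVar (i : nat)
| TFn (f : nat) (args : list term).

Fixpoint tsubst (s : nat -> term) (t : term) : term :=
  match t with
  | TVar i => s i
  | TFn f ts => TFn f (map (tsubst s) ts)
  end.

(** Types.
    - [Bot]            : ⊥
    - [PAt X ts]       : X(t1,...,tn), X a predicate de Bruijn index
    - [Arr A B]        : A → B
    - [FAll A]         : ∀x A   (binds first-order index 0)
    - [PAll n A]       : ∀X A, X n-ary (binds predicate index 0)
    - [Mu A ts]        : μ C x1..xn A <t1..tn>, with n = length ts; binds
                         predicate index 0 (= C) and first-order indices
                         0..n-1 (= x1..xn, x_{k+1} at index k) in A. *)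
Inductive formula : Type :=
| Bot
| PAt (X : nat) (ts : list term)
| Arr (A B : formula)
| FAll (A : formula)
| PAll (n : nat) (A : formula)
| Mu (A : formula) (ts : list term).

Definition upn (k : nat) (s : nat -> term) : nat -> term :=
  fun i => if i <? k then TVar i
           else tsubst (fun j => TVar (j + k)) (s (i - k)).

Fixpoint fsubst_fo (s : nat -> term) (A : formula) : formula :=
  match A with
  | Bot => Bot
  | PAt X ts => PAt X (map (tsubst s) ts)
  | Arr A B => Arr (fsubst_fo s A) (fsubst_fo s B)
  | FAll A => FAll (fsubst_fo (upn 1 s) A)
  | PAll n A => PAll n (fsubst_fo s A)
  | Mu A ts => Mu (fsubst_fo (upn (length ts) s) A) (map (tsubst s) ts)
  end.

Definition uprn (r : nat -> nat) : nat -> nat :=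
  fun j => match j with 0 => 0 | S j => S (r j) end.

Fixpoint fren_pr (r : nat -> nat) (A : formula) : formula :=
  match A with
  | Bot => Bot
  | PAt X ts => PAt (r X) ts
  | Arr A B => Arr (fren_pr r A) (fren_pr r B)
  | FAll A => FAll (fren_pr r A)
  | PAll n A => PAll n (fren_pr (uprn r) A)
  | Mu A ts => Mu (fren_pr (uprn r) A) ts
  end.

(** What a predicate variable is replaced by: another predicate variable,
    or a formula abstraction  λ z1..zn. G  (the z's are first-order indices
    0..n-1 of G; indices >= n of G refer to the ambient context). *)
Inductive ppat : Type :=
| PV (j : nat)
| PL (n : nat) (G : formula).

Definition inst_args (n : nat) (ts : list term) : nat -> term :=
  fun i => if i <? n then nth i ts (TVar 0) else TVar (i - n).

Definition papp (p : ppat) (ts : list term) : formula :=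
  match p with
  | PV j => PAt j ts
  | PL n G => fsubst_fo (inst_args n ts) G
  end.

Definition pshift_fo (k : nat) (p : ppat) : ppat :=
  match p with
  | PV j => PV j
  | PL n G => PL n (fsubst_fo (fun i => if i <? n then TVar i else TVar (i + k)) G)
  end.

Definition pshift_pr (p : ppat) : ppat :=
  match p with
  | PV j => PV (S j)
  | PL n G => PL n (fren_pr S G)
  end.

Definition up_pr (t : nat -> ppat) : nat -> ppat :=
  fun j => match j with 0 => PV 0 | S j => pshift_pr (t j) end.

Fixpoint fsubst_pr (t : nat -> ppat) (A : formula) : formula :=
  match A with
  | Bot => Bot
  | PAt X ts => papp (t X) ts
  | Arr A B => Arr (fsubst_pr t A) (fsubst_pr t B)
  | FAll A => FAll (fsubst_pr (fun j => pshift_fo 1 (t j)) A)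
  | PAll n A => PAll n (fsubst_pr (up_pr t) A)
  | Mu A ts => Mu (fsubst_pr (fun j => pshift_fo (length ts) (up_pr t j)) A) ts
  end.

Definition fshift_fo (A : formula) : formula := fsubst_fo (fun i => TVar (S i)) A.
Definition fshift_pr (A : formula) : formula := fren_pr S A.

Definition inst1 (u : term) : nat -> term :=
  fun i => match i with 0 => u | S i => TVar i end.

Definition instp (n : nat) (G : formula) : nat -> ppat :=
  fun j => match j with 0 => PL n G | S j => PV j end.

(** D[μC x̄ D<z̄> / C(z̄)][t̄/x̄]  for the type  μC x̄ D <t̄>  (n = length t̄). *)
Definition mu_unfold (D : formula) (ts : list term) : formula :=
  let n := length ts in
  fsubst_fo (inst_args n ts)
    (fsubst_pr
       (fun j => match j with
                 | 0 => PL n (Mu (fsubst_fo (fun i => if i <? n then TVar i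
                                                       else TVar (i + 2 * n)) D)
                                 (map TVar (seq 0 n)))
                 | S j => PV j
                 end) D).

(** D[E/C(x̄)] where x̄ (first-order indices 0..n-1) are the variables of the
    μ-binder and may occur free in E. *)
Definition mu_ind_body (D : formula) (n : nat) (E : formula) : formula :=
  fsubst_pr
    (fun j => match j with
              | 0 => PL n (fsubst_fo (fun i => if i <? n then TVar i else TVar (i + n)) E)
              | S j => PV j
              end) D.

Fixpoint occurs (k : nat) (A : formula) : Prop :=
  match A with
  | Bot => False
  | PAt X _ => X = k
  | Arr A B => occurs k A \/ occurs k B
  | FAll A => occurs k A
  | PAll _ A => occurs (S k) A
  | Mu A _ => occurs (S k) A
  end.

(** [polok p k A]: every occurrence of k in A has polarity p
    (p = true: positive). *)
Fixpoint polok (p : bool) (k : nat) (A : formula) : Prop :=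
  match A with
  | Bot => True
  | PAt X _ => p = true \/ X <> k
  | Arr A B => polok (negb p) k A /\ polok p k B
  | FAll A => polok p k A
  | PAll _ A => polok p (S k) A
  | Mu A _ => polok p (S k) A
  end.

Fixpoint ttype (A : formula) : Prop :=
  match A with
  | Bot => True
  | PAt _ _ => True
  | Arr A B => ttype A /\ ttype B
  | FAll A => ttype A
  | PAll _ A => ttype A
  | Mu A _ => ttype A /\ occurs 0 A /\ polok true 0 A
  end.

Definition eq_instance (Eqs : term -> term -> Prop) (v w : term) : Prop :=
  exists l r (s : nat -> term), Eqs l r /\ v = tsubst s l /\ w = tsubst s r.

Inductive sub (Eqs : term -> term -> Prop) : formula -> formula -> Prop :=
| St_refl A : ttype A -> sub Eqs A A
| St_arr A A' B B' : sub Eqs A A' -> sub Eqs B B' -> sub Eqs (Arr A' B) (Arr A B')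
| St_fall_l A B u : sub Eqs (fsubst_fo (inst1 u) A) B -> sub Eqs (FAll A) B
| St_pall_l n A B G : ttype G -> sub Eqs (fsubst_pr (instp n G) A) B ->
    sub Eqs (PAll n A) B
| St_fall_r A B : sub Eqs (fshift_fo A) B -> sub Eqs A (FAll B)
| St_pall_r n A B : sub Eqs (fshift_pr A) B -> sub Eqs A (PAll n B)
| St_eq A B v w : eq_instance Eqs v w -> sub Eqs A (fsubst_fo (inst1 v) B) ->
    sub Eqs A (fsubst_fo (inst1 w) B)
| St_trans A B C : sub Eqs A B -> sub Eqs B C -> sub Eqs A C
| St_fold D ts : ttype (Mu D ts) -> sub Eqs (mu_unfold D ts) (Mu D ts)
| St_unfold D ts : ttype (Mu D ts) -> sub Eqs (Mu D ts) (mu_unfold D ts)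
| St_ind D ts E : ttype (Mu D ts) -> ttype E ->
    sub Eqs (mu_ind_body D (length ts) E) E ->
    sub Eqs (Mu D ts) (fsubst_fo (inst_args (length ts) ts) E).

Fixpoint arrow_free (A : formula) : Prop :=
  match A with
  | Bot => True
  | PAt _ _ => True
  | Arr _ _ => False
  | FAll A => arrow_free A
  | PAll _ A => arrow_free A
  | Mu A _ => arrow_free A
  end.

Definition without_arrow (A : formula) : Prop := ttype A /\ arrow_free A.

(** For an arrow-free A: [Some (j, d)] where X(...) with raw index j is the
    unique atomic formula of A, and d is the number of predicate binders
    above it.  X is free in A iff d <= j, and then its index in the
    context of A is j - d. *)
Fixpoint head_info (A : formula) : option (nat * nat) :=
  match A with
  | Bot => None
  | PAt X _ => Some (X, 0)
  | Arr _ _ => None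
  | FAll A => head_info A
  | PAll _ A => option_map (fun p => (fst p, S (snd p))) (head_info A)
  | Mu A _ => option_map (fun p => (fst p, S (snd p))) (head_info A)
  end.

(** At(A), as a predicate index in the context of A (meaningful when free). *)
Definition At (A : formula) : option nat :=
  option_map (fun p => fst p - snd p) (head_info A).

Definition kind1 (A : formula) : Prop :=
  without_arrow A /\ exists j d, head_info A = Some (j, d) /\ d <= j.

Definition kind2 (A : formula) : Prop :=
  without_arrow A /\ exists j d, head_info A = Some (j, d) /\ j < d.

(* A without-arrow type is a prefix of binders over its unique atom, so each
   subtyping rule can only move the atom under or out of binders: when the
   atom is a free variable [k] no rule can bind it, while the μ-rules never
   apply because the requirement that [C] occur in the body forces the atom
   of an arrow-free μ-type to be the bound [C].  Conversely, when the atom is bound, eliminating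
   the binder that binds it (instantiating it by ∀X.X, or folding the μ-type
   into ∀X.X by the induction rule) leaves a type of the form
   ∀…∀ (∀X.X), which is below every type. *)
From Stdlib Require Import List Arith Lia Wf_nat.
Import ListNotations.

(* ∀X.X with X nullary: below every type, since X may be instantiated by anything. *)
Notation Least := (PAll 0 (PAt 0 nil)).

Lemma tsubst_id s : (forall i, s i = TVar i) -> forall t, tsubst s t = t.
Proof.
  intros Hs; fix IH 1; intros [i | f ts]; simpl.
  - apply Hs.
  - f_equal. induction ts as [|t ts IHts]; simpl; f_equal; [apply IH | exact IHts].
Qed.

Lemma upn_id k s : (forall i, s i = TVar i) -> forall i, upn k s i = TVar i.
Proof.
  intros Hs i; unfold upn. destruct (Nat.ltb_spec i k); [reflexivity|].
  rewrite Hs; simpl; f_equal; lia.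
Qed.

Lemma fsubst_fo_id A : forall s, (forall i, s i = TVar i) -> fsubst_fo s A = A.
Proof.
  induction A; intros s Hs; simpl; f_equal; auto using upn_id.
  all: rewrite <- map_id; apply map_ext; auto using tsubst_id.
Qed.

Fixpoint head_free (A : formula) (k : nat) : Prop :=
  match A with
  | PAt X _ => X = k
  | FAll A => head_free A k
  | PAll _ A | Mu A _ => head_free A (S k)
  | _ => False
  end.

Fixpoint head_bound (A : formula) : Prop :=
  match A with
  | FAll A => head_bound A
  | PAll _ A | Mu A _ => head_bound A \/ head_free A 0
  | _ => False
  end.

Lemma head_free_unique A : forall k k', head_free A k -> head_free A k' -> k = k'.
Proof.
  induction A; simpl; intros k k' Hk Hk'; try contradiction; subst; eauto.
  all: injection (IHA _ _ Hk Hk'); auto.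
Qed.

Lemma head_free_not_bound A : forall k, head_free A k -> ~ head_bound A.
Proof.
  induction A; simpl; intros k Hk Hb; try contradiction; [exact (IHA k Hk Hb)|..].
  all: destruct Hb as [Hb | H0];
    [exact (IHA _ Hk Hb) | discriminate (head_free_unique _ _ _ Hk H0)].
Qed.

Lemma head_free_arrow_free A : forall k, head_free A k -> arrow_free A.
Proof. induction A; simpl; eauto. Qed.

Lemma occurs_iff_head_free A : forall k, arrow_free A -> occurs k A <-> head_free A k.
Proof.
  induction A; simpl; intros k Haf; try contradiction; auto; reflexivity.
Qed.

Lemma polok_true_arrow_free A : forall k, arrow_free A -> polok true k A.
Proof. induction A; simpl; intuition. Qed.

Lemma ttype_mu_arrow_free A ts :
  arrow_free A -> ttype (Mu A ts) <-> ttype A /\ head_free A 0.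
Proof.
  intros Haf; simpl; rewrite occurs_iff_head_free by exact Haf.
  split; [tauto|]. intros [Ht H0]; auto using polok_true_arrow_free.
Qed.

Lemma mu_head_bound A ts : ttype (Mu A ts) -> arrow_free A -> head_bound (Mu A ts).
Proof. intros Ht Haf; right; apply (ttype_mu_arrow_free A ts Haf), Ht. Qed.

Lemma head_free_iff_head_info A :
  forall k, head_free A k <-> exists d, head_info A = Some (k + d, d).
Proof.
  induction A; intros k; simpl.
  all: try solve [split; [contradiction | intros [d Hd]; discriminate] | apply IHA].
  2, 3: rewrite IHA; destruct (head_info A) as [[j e]|]; simpl;
    [ split; intros [d Hd]; injection Hd as Hj He; [exists (S e) | exists e];
      f_equal; f_equal; lia
    | split; intros [d Hd]; discriminate ].
  split; [intros ->; exists 0; f_equal; f_equal; lia|].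
  intros [d Hd]; injection Hd; lia.
Qed.

Lemma head_bound_of_head_info A :
  forall j d, head_info A = Some (j, d) -> j < d -> head_bound A.
Proof.
  induction A; intros j d Hh Hjd; simpl in *; try discriminate;
    [injection Hh; lia | eauto | |].
  all: destruct (head_info A) as [[j' d']|] eqn:E; simpl in Hh; try discriminate;
    injection Hh as <- <-.
  all: destruct (Nat.lt_ge_cases j' d'); [left; eauto | right].
  all: apply head_free_iff_head_info; exists d'; rewrite E; f_equal; f_equal; lia.
Qed.

Lemma kind1_iff A : kind1 A <-> ttype A /\ exists k, head_free A k.
Proof.
  split.
  - intros [[Ht _] [j [d [Hh Hdj]]]]; split; [exact Ht|].
    exists (j - d); apply head_free_iff_head_info; exists d; rewrite Hh.
    f_equal; f_equal; lia.
  - intros [Ht [k Hk]]; split; [split; [exact Ht | exact (head_free_arrow_free A k Hk)]|].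
    destruct (proj1 (head_free_iff_head_info A k) Hk) as [d Hd].
    exists (k + d), d; split; [exact Hd | lia].
Qed.

Lemma At_head_free A k : head_free A k -> At A = Some k.
Proof.
  intros Hk; destruct (proj1 (head_free_iff_head_info A k) Hk) as [d Hd].
  unfold At; rewrite Hd; simpl; f_equal; lia.
Qed.

Lemma kind2_head_bound A : kind2 A -> without_arrow A /\ head_bound A.
Proof.
  intros [Hw [j [d [Hh Hjd]]]]; split; [exact Hw | exact (head_bound_of_head_info A j d Hh Hjd)].
Qed.

Fixpoint binder_prefix_length (A : formula) : nat :=
  match A with
  | FAll A | PAll _ A | Mu A _ => S (binder_prefix_length A)
  | _ => 0
  end.

Lemma head_free_fo A : forall s k, head_free (fsubst_fo s A) k = head_free A k.
Proof. induction A; intros; simpl; auto. Qed.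

Lemma head_bound_fo A : forall s, head_bound (fsubst_fo s A) = head_bound A.
Proof. induction A; intros; simpl; rewrite ?IHA, ?head_free_fo; auto. Qed.

Lemma arrow_free_fo A : forall s, arrow_free (fsubst_fo s A) = arrow_free A.
Proof. induction A; intros; simpl; auto. Qed.

Lemma occurs_fo A : forall s k, occurs k (fsubst_fo s A) = occurs k A.
Proof. induction A; intros; simpl; rewrite ?IHA1, ?IHA2, ?IHA; reflexivity. Qed.

Lemma polok_fo A : forall s p k, polok p k (fsubst_fo s A) = polok p k A.
Proof. induction A; intros; simpl; rewrite ?IHA1, ?IHA2, ?IHA; reflexivity. Qed.

Lemma ttype_fo A : forall s, ttype (fsubst_fo s A) = ttype A.
Proof.
  induction A; intros; simpl; rewrite ?IHA1, ?IHA2, ?IHA, ?occurs_fo, ?polok_fo;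
    reflexivity.
Qed.

Lemma binder_prefix_length_fo A :
  forall s, binder_prefix_length (fsubst_fo s A) = binder_prefix_length A.
Proof. induction A; intros; simpl; auto. Qed.

Lemma head_free_ren A : forall r k, head_free A k -> head_free (fren_pr r A) (r k).
Proof.
  induction A; simpl; intros r k Hk; try contradiction;
    [congruence | auto | apply (IHA (uprn r) (S k)), Hk ..].
Qed.

Lemma head_bound_ren A : forall r, head_bound A -> head_bound (fren_pr r A).
Proof.
  induction A; simpl; intros r Hb; try contradiction; auto.
  all: destruct Hb as [Hb | H0]; [left; auto | right; apply (head_free_ren A (uprn r) 0), H0].
Qed.

Lemma head_free_pr A : forall t k m,
  head_free A k -> t k = PV m -> head_free (fsubst_pr t A) m.
Proof.
  induction A; simpl; intros t k m Hk Htk; try contradiction;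
    [subst; rewrite Htk; reflexivity | apply (IHA _ k) | apply (IHA _ (S k)) ..];
    try exact Hk; simpl; rewrite Htk; reflexivity.
Qed.

Lemma head_bound_pr A : forall t, head_bound A -> head_bound (fsubst_pr t A).
Proof.
  induction A; simpl; intros t Hb; try contradiction; auto.
  all: destruct Hb as [Hb | H0];
    [left; auto | right; apply (head_free_pr A _ 0); [exact H0 | reflexivity]].
Qed.

Lemma head_bound_pr_pat A : forall t k n G,
  head_free A k -> t k = PL n G -> head_bound G -> head_bound (fsubst_pr t A).
Proof.
  induction A; simpl; intros t k m G Hk Htk HG; try contradiction.
  - subst; rewrite Htk; simpl; rewrite head_bound_fo; exact HG.
  - eapply IHA; [exact Hk | rewrite Htk; reflexivity | rewrite head_bound_fo; exact HG].
  - left; eapply IHA; [exact Hk | simpl; rewrite Htk; reflexivity | ].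
    apply head_bound_ren, HG.
  - left; eapply IHA; [exact Hk | simpl; rewrite Htk; reflexivity | ].
    rewrite head_bound_fo; apply head_bound_ren, HG.
Qed.

Lemma arrow_free_pr_inv A : forall t, arrow_free (fsubst_pr t A) -> arrow_free A.
Proof. induction A; simpl; eauto. Qed.

Definition maps_head_to_var (t : nat -> ppat) (A : formula) : Prop :=
  forall k, head_free A k -> exists m, t k = PV m.

Lemma maps_head_to_var_shift_fo t A l :
  maps_head_to_var t A -> maps_head_to_var (fun j => pshift_fo l (t j)) A.
Proof. intros Ht k Hk; destruct (Ht k Hk) as [m Hm]; exists m; rewrite Hm; reflexivity. Qed.

Lemma maps_head_to_var_up_pr t n A :
  maps_head_to_var t (PAll n A) -> maps_head_to_var (up_pr t) A.
Proof.
  intros Ht [|k] Hk; [exists 0; reflexivity|].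
  destruct (Ht k Hk) as [m Hm]; exists (S m); simpl; rewrite Hm; reflexivity.
Qed.

Lemma binder_prefix_length_pr A : forall t,
  maps_head_to_var t A -> binder_prefix_length (fsubst_pr t A) = binder_prefix_length A.
Proof.
  induction A; simpl; intros t Ht; try reflexivity.
  - destruct (Ht X eq_refl) as [m Hm]; rewrite Hm; reflexivity.
  - f_equal; apply IHA, maps_head_to_var_shift_fo, Ht.
  - f_equal; apply IHA, (maps_head_to_var_up_pr _ n), Ht.
  - f_equal; apply IHA, maps_head_to_var_shift_fo, (maps_head_to_var_up_pr _ 0), Ht.
Qed.

Lemma without_arrow_pr A : forall t,
  without_arrow A -> maps_head_to_var t A -> without_arrow (fsubst_pr t A).
Proof.
  induction A; intros t [Ht Haf] Hm; simpl in Haf; try contradiction.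
  - split; exact I.
  - destruct (Hm X eq_refl) as [m HX]; simpl; rewrite HX; split; exact I.
  - apply IHA; [split; assumption | apply maps_head_to_var_shift_fo, Hm].
  - apply IHA; [split; assumption | apply (maps_head_to_var_up_pr _ n), Hm].
  - apply (ttype_mu_arrow_free A ts Haf) in Ht as [Ht H0].
    destruct (IHA (fun j => pshift_fo (length ts) (up_pr t j))) as [Ht' Haf'].
    + split; assumption.
    + apply maps_head_to_var_shift_fo, (maps_head_to_var_up_pr _ 0), Hm.
    + split; [|exact Haf'].
      apply (ttype_mu_arrow_free _ ts Haf'); split; [exact Ht'|].
      apply (head_free_pr A _ 0); [exact H0 | reflexivity].
Qed.

Lemma mu_unfold_head_bound D ts :
  ttype (Mu D ts) -> arrow_free D -> head_bound (mu_unfold D ts).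
Proof.
  intros Ht Haf; apply (ttype_mu_arrow_free D ts Haf) in Ht as [_ H0].
  unfold mu_unfold; cbv zeta; rewrite head_bound_fo.
  eapply (head_bound_pr_pat D _ 0); [exact H0 | reflexivity |].
  right; rewrite head_free_fo; exact H0.
Qed.

Lemma sub_head_free Eqs A B : sub Eqs A B -> forall k, head_free A k -> head_free B k.
Proof.
  induction 1 as [A _ | | A B u _ IH | n A B G _ _ IH | A B _ IH | n A B _ IH
                 | A B v w _ _ IH | A B C _ IH1 _ IH2 | D ts HD | D ts HD | D ts E HD _ _ _];
    intros k Hk.
  - exact Hk.
  - contradiction.
  - apply IH; rewrite head_free_fo; exact Hk.
  - apply IH, (head_free_pr A _ (S k)); [exact Hk | reflexivity].
  - apply IH; unfold fshift_fo; rewrite head_free_fo; exact Hk.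
  - apply IH, (head_free_ren A S k), Hk.
  - rewrite head_free_fo; rewrite <- (head_free_fo B (inst1 v)); apply IH, Hk.
  - apply IH2, IH1, Hk.
  - exfalso; apply (head_free_not_bound _ k Hk), mu_unfold_head_bound; [exact HD|].
    apply head_free_arrow_free in Hk; unfold mu_unfold in Hk; cbv zeta in Hk.
    rewrite arrow_free_fo in Hk; exact (arrow_free_pr_inv D _ Hk).
  - exfalso; apply (head_free_not_bound _ k Hk), mu_head_bound;
      [exact HD | exact (head_free_arrow_free _ _ Hk)].
  - exfalso; apply (head_free_not_bound _ k Hk), mu_head_bound;
      [exact HD | exact (head_free_arrow_free _ _ Hk)].
Qed.

Inductive quantified_least : formula -> Prop :=
| ql_least : quantified_least Least
| ql_fall A : quantified_least A -> quantified_least (FAll A)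
| ql_pall n A : quantified_least A -> quantified_least (PAll n A).

Lemma fsubst_fo_quantified_least A s : quantified_least A -> fsubst_fo s A = A.
Proof. intros H; revert s; induction H; intros s; simpl; f_equal; auto. Qed.

Lemma fren_pr_quantified_least A r : quantified_least A -> fren_pr r A = A.
Proof. intros H; revert r; induction H; intros r; simpl; f_equal; auto. Qed.

Lemma fsubst_pr_quantified_least A t : quantified_least A -> fsubst_pr t A = A.
Proof. intros H; revert t; induction H; intros t; simpl; f_equal; auto. Qed.

Lemma quantified_least_pr_pat A : forall t k n G,
  ttype A -> head_free A k -> t k = PL n G -> quantified_least G ->
  quantified_least (fsubst_pr t A).
Proof.
  induction A; simpl; intros t k m G Ht Hk Htk HG; try contradiction.
  - subst; rewrite Htk; simpl; rewrite fsubst_fo_quantified_least; exact HG.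
  - constructor; apply (IHA _ k m G Ht Hk); [|exact HG].
    rewrite Htk; simpl; rewrite fsubst_fo_quantified_least by exact HG; reflexivity.
  - constructor; apply (IHA _ (S k) m G Ht Hk); [|exact HG].
    simpl; rewrite Htk; simpl; rewrite fren_pr_quantified_least by exact HG; reflexivity.
  - exfalso; apply (head_free_not_bound (Mu A ts) k Hk), mu_head_bound;
      [exact Ht | exact (head_free_arrow_free _ _ Hk)].
Qed.

Lemma least_sub Eqs B : ttype B -> sub Eqs Least B.
Proof.
  intros HB; apply (St_pall_l Eqs 0 (PAt 0 []) B B HB); simpl.
  rewrite fsubst_fo_id; [apply St_refl, HB|].
  intros i; unfold inst_args; simpl; rewrite Nat.sub_0_r; reflexivity.
Qed.

Lemma quantified_least_sub Eqs A B : quantified_least A -> ttype B -> sub Eqs A B.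
Proof.
  intros H HB; induction H.
  - apply least_sub, HB.
  - apply (St_fall_l Eqs A B (TVar 0)); rewrite fsubst_fo_quantified_least; assumption.
  - apply (St_pall_l Eqs n A B Least I); rewrite fsubst_pr_quantified_least; assumption.
Qed.

Lemma head_bound_sub Eqs A :
  without_arrow A -> head_bound A -> forall B, ttype B -> sub Eqs A B.
Proof.
  induction A as [A IH] using (induction_ltof1 _ binder_prefix_length).
  intros [Ht Haf] Hb B HB; destruct A as [| X ts | A1 A2 | A | n A | A ts];
    simpl in Ht, Haf, Hb; try contradiction.
  - apply (St_fall_l Eqs A B (TVar 0)), IH; [| split | |];
      rewrite ?ttype_fo, ?arrow_free_fo, ?head_bound_fo; auto.
    unfold ltof; simpl; rewrite binder_prefix_length_fo; lia.
  - apply (St_pall_l Eqs n A B Least I).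
    destruct Hb as [Hb | H0].
    + assert (Hm : maps_head_to_var (instp n Least) A)
        by (intros k Hk; contradiction (head_free_not_bound A k Hk Hb)).
      apply IH; [| apply without_arrow_pr | apply head_bound_pr |]; auto.
      * unfold ltof; rewrite binder_prefix_length_pr by exact Hm; simpl; lia.
      * split; assumption.
    + apply quantified_least_sub; [|exact HB].
      apply (quantified_least_pr_pat A _ 0 n Least Ht H0 eq_refl ql_least).
  - destruct (proj1 (ttype_mu_arrow_free A ts Haf) Ht) as [HtA H0].
    apply (St_trans _ _ Least); [|apply least_sub, HB].
    apply (St_ind Eqs A ts Least Ht I), quantified_least_sub; [|exact I].
    exact (quantified_least_pr_pat A _ 0 (length ts) Least HtA H0 eq_refl ql_least).
Qed.

Theorem lemma4p4 (Eqs : term -> term -> Prop) :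
  (forall A B : formula, ttype A -> ttype B ->
     kind1 A -> sub Eqs A B -> kind1 B /\ At A = At B) /\
  (forall A B : formula, ttype A -> ttype B ->
     kind2 A -> sub Eqs A B).
Proof.
  split.
  - intros A B _ HB HA HAB.
    apply kind1_iff in HA as [_ [k Hk]].
    pose proof (sub_head_free Eqs A B HAB k Hk) as HkB.
    split; [apply kind1_iff; eauto|].
    rewrite (At_head_free A k Hk), (At_head_free B k HkB); reflexivity.
  - intros A B _ HB HA.
    apply kind2_head_bound in HA as [HwA Hb].
    exact (head_bound_sub Eqs A HwA Hb B HB).
Qed.
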